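(* Let $\lambda>0$, $p\in(0,1)$, let $B\ge1$ be an integer, $\alpha>2$, $d>0$, $\theta>0$, $R=\log(1+\theta)$, $\lambda_{max}=\frac{1}{d^2\theta^{2/\alpha}\kappa(\alpha)}$ with $\kappa(\alpha)=\frac{2\pi^2}{\alpha\sin(2\pi/\alpha)}$. Let $f_B:[0,1]\to\mathbb{R}$ be as defined in the context and $$C_B(q)=\lambda f_B(q)\exp\!\Big(-\frac{\lambda f_B(q)}{\lambda_{max}}\Big)R .$$ If there exists $\hat q\in[0,1]$ with $f_B(\hat q)=\frac{\lambda_{max}}{\lambda}$, then $q^\star=\hat q$ maximizes $C_B$ over $[0,1]$; otherwise $q^\star=1$ maximizes $C_B$ over $[0,1]$.
   Context: For $q\in(0,1]$ define $r_B(q)$ by: if $B=1$, $r_1(q)=\frac{p}{p+q-pq}$; if $B>1$ and $q\ne p$, $r_B(q)=\frac{\frac{p}{q}(1-\rho^B)}{1-\frac{p}{q}\rho^B}$ with $\rho=\frac{p(1-q)}{q(1-p)}$; if $B>1$ and $q=p$, $r_B(p)=\frac{B}{B+1-p}$. Set $f_B(q)=q\,r_B(q)$ for $q\in(0,1]$ and $f_B(0)=0$. Model: transmitters form a homogeneous Poisson point process of density $\lambda$ in $\mathbb{R}^2$, each with receiver at distance $d$, path-loss exponent $\alpha$, Rayleigh fading, success if SIR exceeds $\theta$; each transmitter harvests one energy unit per slot with probability $p$, stores it in a battery of capacity $B$, and when the battery is nonempty transmits with unit power with ALOHA probability $q$. Then $r_B(q)$ is the stationary probability that the battery is nonempty and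 $C_B(q)$ is the transmission capacity; the optimal ALOHA probability maximizes $C_B$. *)

From Stdlib Require Import Reals.
Open Scope R_scope.

Definition rho (p q : R) : R := (p * (1 - q)) / (q * (1 - p)).

(* r_B(q): stationary probability that the battery is nonempty, q in (0,1] *)
Definition r_B (B : nat) (p q : R) : R :=
  if Nat.eqb B 1 then p / (p + q - p * q)
  else if Req_EM_T q p then INR B / (INR B + 1 - p)
  else ((p / q) * (1 - rho p q ^ B)) / (1 - (p / q) * rho p q ^ B).

Definition f_B (B : nat) (p q : R) : R :=
  if Req_EM_T q 0 then 0 else q * r_B B p q.

Definition kappa (alpha : R) : R := 2 * PI ^ 2 / (alpha * sin (2 * PI / alpha)).

Definition lambda_max (alpha d theta : R) : R :=
  1 / (d ^ 2 * Rpower theta (2 / alpha) * kappa alpha).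

Definition C_B (lam p : R) (B : nat) (alpha d theta q : R) : R :=
  lam * f_B B p q * exp (- (lam * f_B B p q) / lambda_max alpha d theta)
      * ln (1 + theta).

(* The ALOHA probability enters C_B only through x = lam f_B(q), and
   x exp(-x / lambda_max) is maximal at x = lambda_max and increasing below it.
   On [0,1] the function f_B is continuous, with f_B(0) = 0, f_B(1) = p and
   0 <= f_B <= p.  Hence if f_B hits lambda_max / lam the capacity is maximal
   there; otherwise, by the intermediate value theorem, lam f_B < lambda_max on
   [0,1], and q = 1 maximizes lam f_B(q), hence C_B. *)

From Stdlib Require Import Reals Lra Lia Psatz Ranalysis5.
Open Scope R_scope.

Fixpoint pow_diff_sum (a b : R) (n : nat) : R :=
  match n with
  | O => 0
  | Datatypes.S n => b * pow_diff_sum a b n + a ^ n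
  end.

Lemma pow_sub_pow_factor (a b : R) (n : nat) :
  b ^ n - a ^ n = (b - a) * pow_diff_sum a b n.
Proof.
induction n as [|n IH]; simpl; [ring|].
transitivity (b * (b ^ n - a ^ n) + (b - a) * a ^ n); [ring|].
rewrite IH; ring.
Qed.

Lemma pow_diff_sum_ge0 (a b : R) (n : nat) :
  0 <= a -> 0 <= b -> 0 <= pow_diff_sum a b n.
Proof.
intros Ha Hb; induction n as [|n IH]; simpl; [lra|].
pose proof (pow_le a n Ha); nra.
Qed.

Lemma pow_diff_sum_gt0 (a b : R) (n : nat) :
  0 <= a -> 0 < b -> 0 < pow_diff_sum a b (Datatypes.S n).
Proof.
intros Ha Hb; induction n as [|n IH]; simpl in *; [lra|].
pose proof (pow_le a n Ha); nra.
Qed.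

Lemma pow_diff_sum_diag (c : R) (n : nat) :
  pow_diff_sum c c (Datatypes.S n) = INR (Datatypes.S n) * c ^ n.
Proof.
induction n as [|n IH]; [simpl; ring|].
change (pow_diff_sum c c (Datatypes.S (Datatypes.S n)))
  with (c * pow_diff_sum c c (Datatypes.S n) + c ^ Datatypes.S n).
rewrite IH, !S_INR; simpl; ring.
Qed.

Lemma continuity_pow_diff_sum (a b : R -> R) (n : nat) (x : R) :
  continuity_pt a x -> continuity_pt b x ->
  continuity_pt (fun q => pow_diff_sum (a q) (b q) n) x.
Proof.
intros Ca Cb; induction n as [|n IH]; simpl.
- apply continuity_pt_const; intros u v; reflexivity.
- change (continuity_pt
    (b * (fun q => pow_diff_sum (a q) (b q) n) + (fun q => (a q ^ n)%R))%F x).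
  apply continuity_pt_plus; [apply continuity_pt_mult; assumption|].
  change (continuity_pt (comp (fun y => y ^ n) a) x).
  apply continuity_pt_comp; [assumption | apply derivable_continuous_pt, derivable_pt_pow].
Qed.

(* Multiplying numerator and denominator of r_B by (q(1-p))^B and cancelling
   q - p removes the removable singularities of r_B at q = p and f_B at q = 0. *)
Definition idle_prob (p q : R) : R := p * (1 - q).
Definition harvest_prob (p q : R) : R := q * (1 - p).

Definition f_closed (B : nat) (p q : R) : R :=
  let s := pow_diff_sum (idle_prob p q) (harvest_prob p q) B in
  p * q * s / (q * s + idle_prob p q ^ B).

Section ClosedForm.

Variables (B : nat) (p : R).
Hypotheses (HB : (1 <= B)%nat) (Hp : 0 < p < 1).

Lemma f_closed_denom_pos (q : R) : 0 <= q <= 1 ->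
  0 < q * pow_diff_sum (idle_prob p q) (harvest_prob p q) B + idle_prob p q ^ B.
Proof.
intros Hq. destruct B as [|n]; [lia|].
assert (Ha : 0 <= idle_prob p q) by (unfold idle_prob; nra).
pose proof (pow_le _ (Datatypes.S n) Ha).
destruct (Req_dec q 0) as [->|Hq0].
- assert (0 < idle_prob p 0) by (unfold idle_prob; lra).
  pose proof (pow_lt _ (Datatypes.S n) H0); lra.
- assert (Hb : 0 < harvest_prob p q) by (unfold harvest_prob; nra).
  pose proof (pow_diff_sum_gt0 _ _ n Ha Hb); nra.
Qed.

Lemma f_B_closed_form (q : R) : 0 <= q <= 1 -> f_B B p q = f_closed B p q.
Proof.
intros Hq. pose proof (f_closed_denom_pos q Hq) as HD.
unfold f_B, f_closed. destruct (Req_EM_T q 0) as [->|Hq0]; [unfold Rdiv; ring|].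
unfold r_B. destruct (Nat.eqb_spec B 1) as [->|HB1].
{ simpl in *; unfold idle_prob, harvest_prob in *; field; nra. }
destruct (Req_EM_T q p) as [->|Hqp].
- destruct B as [|n]; [lia|].
  change (harvest_prob p p) with (idle_prob p p) in *.
  rewrite pow_diff_sum_diag in HD |- *; rewrite <- tech_pow_Rmult in *.
  assert (0 < INR (Datatypes.S n)) by (apply lt_0_INR; lia).
  assert (Hc : 0 < idle_prob p p) by (unfold idle_prob; nra).
  pose proof (pow_lt _ n Hc).
  field_simplify_eq; [unfold idle_prob; ring|].
  split; [lra|]; intro; nra.
- set (a := idle_prob p q) in *; set (b := harvest_prob p q) in *.
  assert (Hrho : rho p q ^ B = a ^ B / b ^ B).
  { unfold rho, Rdiv; rewrite Rpow_mult_distr, pow_inv; reflexivity. }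
  assert (Hb : 0 < b) by (unfold b, harvest_prob; nra).
  pose proof (pow_lt _ B Hb).
  assert (Hbb : b ^ B = a ^ B + (q - p) * pow_diff_sum a b B).
  { replace (q - p) with (b - a) by (unfold a, b, idle_prob, harvest_prob; ring).
    rewrite <- pow_sub_pow_factor; ring. }
  assert (Hden : q * b ^ B - p * a ^ B <> 0).
  { rewrite Hbb.
    replace (q * (a ^ B + (q - p) * pow_diff_sum a b B) - p * a ^ B)
      with ((q - p) * (q * pow_diff_sum a b B + a ^ B)) by ring.
    apply Rmult_integral_contrapositive; split; lra. }
  rewrite Hrho; field_simplify_eq; [rewrite Hbb; ring|].
  repeat split; lra.
Qed.

Lemma continuity_f_closed (q : R) : 0 <= q <= 1 -> continuity_pt (f_closed B p) q.
Proof.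
intros Hq. pose proof (f_closed_denom_pos q Hq).
assert (Cs : continuity_pt
  (fun q => pow_diff_sum (idle_prob p q) (harvest_prob p q) B) q).
{ apply continuity_pow_diff_sum; unfold idle_prob, harvest_prob; reg. }
unfold f_closed.
change (continuity_pt
  ((fun q => (p * q)%R) * (fun q => pow_diff_sum (idle_prob p q) (harvest_prob p q) B)
   / ((fun q => q) * (fun q => pow_diff_sum (idle_prob p q) (harvest_prob p q) B)
      + (fun q => (idle_prob p q ^ B)%R)))%F q).
apply continuity_pt_div.
- apply continuity_pt_mult; [reg | exact Cs].
- apply continuity_pt_plus; [apply continuity_pt_mult; [reg | exact Cs]|].
  unfold idle_prob; reg.
- unfold plus_fct, mult_fct; lra.
Qed.

Lemma f_closed_bounds (q : R) : 0 <= q <= 1 -> 0 <= f_closed B p q <= p.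
Proof.
intros Hq. pose proof (f_closed_denom_pos q Hq). unfold f_closed in *.
assert (Ha : 0 <= idle_prob p q) by (unfold idle_prob; nra).
assert (Hb : 0 <= harvest_prob p q) by (unfold harvest_prob; nra).
pose proof (pow_diff_sum_ge0 _ _ B Ha Hb). pose proof (pow_le _ B Ha).
set (s := pow_diff_sum (idle_prob p q) (harvest_prob p q) B) in *.
set (x := idle_prob p q ^ B) in *.
split.
- unfold Rdiv; apply Rmult_le_pos.
  + apply Rmult_le_pos; [apply Rmult_le_pos|]; lra.
  + left; apply Rinv_0_lt_compat; lra.
- apply Rmult_le_reg_r with (q * s + x); [lra|].
  unfold Rdiv; rewrite Rmult_assoc, Rinv_l; nra.
Qed.

Lemma f_closed_0 : f_closed B p 0 = 0.
Proof. unfold f_closed, Rdiv; ring. Qed.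

Lemma f_closed_1 : f_closed B p 1 = p.
Proof.
pose proof (f_closed_denom_pos 1 ltac:(lra)). unfold f_closed in *.
replace (idle_prob p 1) with 0 in * by (unfold idle_prob; ring).
destruct B as [|n]; [lia|]. rewrite pow_i in * by lia. field; lra.
Qed.

Lemma f_B_bounds (q : R) : 0 <= q <= 1 -> 0 <= f_B B p q <= p.
Proof. intros Hq; rewrite f_B_closed_form by exact Hq; exact (f_closed_bounds q Hq). Qed.

Lemma f_B_1 : f_B B p 1 = p.
Proof. rewrite f_B_closed_form by lra; exact f_closed_1. Qed.

Lemma f_B_onto (y : R) : 0 <= y <= p -> exists q, 0 <= q <= 1 /\ f_B B p q = y.
Proof.
intros Hy.
destruct (Req_dec y 0) as [->|Hy0].
{ exists 0; split; [lra|]; rewrite f_B_closed_form by lra; exact f_closed_0. }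
destruct (Req_dec y p) as [->|Hyp]; [exists 1; split; [lra | exact f_B_1]|].
destruct (IVT_interv (fun q => f_closed B p q - y) 0 1) as [q [Hq Hfq]].
- intros a Ha. apply continuity_pt_minus; [exact (continuity_f_closed a Ha)|].
  apply continuity_pt_const; intros u v; reflexivity.
- lra.
- rewrite f_closed_0; lra.
- rewrite f_closed_1; lra.
- exists q; split; [exact Hq|]. rewrite f_B_closed_form by exact Hq; lra.
Qed.

End ClosedForm.

Lemma lambda_max_pos (alpha d theta : R) :
  2 < alpha -> 0 < d -> 0 < theta -> 0 < lambda_max alpha d theta.
Proof.
intros Ha Hd Ht. pose proof PI_RGT_0.
assert (Hsin : 0 < sin (2 * PI / alpha)).
{ apply sin_gt_0; [apply Rdiv_lt_0_compat; lra|].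
  apply Rmult_lt_reg_r with alpha; [lra|].
  unfold Rdiv; rewrite Rmult_assoc, Rinv_l by lra; nra. }
assert (0 < Rpower theta (2 / alpha)) by (unfold Rpower; apply exp_pos).
unfold lambda_max, kappa.
apply Rdiv_lt_0_compat; [lra|].
apply Rmult_lt_0_compat; [apply Rmult_lt_0_compat; nra|].
apply Rdiv_lt_0_compat; nra.
Qed.

(* Both facts about x exp(-x/L) follow from 1 + t <= exp t. *)
Lemma xexp_le_at_max (L x : R) : 0 < L -> x * exp (- x / L) <= L * exp (- L / L).
Proof.
intros HL. set (t := x / L).
replace x with (L * t) by (unfold t; field; lra).
replace (- (L * t) / L) with (- t) by (field; lra).
replace (- L / L) with (-1) by (field; lra).
assert (Ht : t <= exp (t - 1)) by (pose proof (exp_ineq1_le (t - 1)); lra).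
replace (exp (-1)) with (exp (t - 1) * exp (- t)) by (rewrite <- exp_plus; f_equal; ring).
rewrite Rmult_assoc; apply Rmult_le_compat_l; [lra|].
apply Rmult_le_compat_r; [left; apply exp_pos | exact Ht].
Qed.

Lemma xexp_le_increasing (L x y : R) : 0 < L -> 0 <= x <= y -> y <= L ->
  x * exp (- x / L) <= y * exp (- y / L).
Proof.
intros HL Hxy HyL. set (t := (y - x) / L).
assert (Ht : 0 <= t)
  by (unfold t, Rdiv; apply Rmult_le_pos; [lra | left; apply Rinv_0_lt_compat; lra]).
replace (- x / L) with (- y / L + t) by (unfold t; field; lra).
rewrite exp_plus.
assert (Hx : x <= y * exp (- t)).
{ pose proof (exp_ineq1_le (- t)).
  assert (x = y - L * t) by (unfold t; field; lra). nra. }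
assert (Hxt : x * exp t <= y).
{ apply Rle_trans with (y * exp (- t) * exp t).
  - apply Rmult_le_compat_r; [left; apply exp_pos | exact Hx].
  - rewrite Rmult_assoc, <- exp_plus, Rplus_opp_l, exp_0; lra. }
replace (x * (exp (- y / L) * exp t)) with (x * exp t * exp (- y / L)) by ring.
apply Rmult_le_compat_r; [left; apply exp_pos | exact Hxt].
Qed.

Theorem theorem2 (lam p : R) (B : nat) (alpha d theta : R)
  (Hlam : 0 < lam) (Hp0 : 0 < p) (Hp1 : p < 1) (HB : (1 <= B)%nat)
  (Halpha : 2 < alpha) (Hd : 0 < d) (Htheta : 0 < theta) :
  (forall qh : R, 0 <= qh <= 1 ->
     f_B B p qh = lambda_max alpha d theta / lam ->
     forall q : R, 0 <= q <= 1 ->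
       C_B lam p B alpha d theta q <= C_B lam p B alpha d theta qh) /\
  ((~ exists qh : R, 0 <= qh <= 1 /\ f_B B p qh = lambda_max alpha d theta / lam) ->
     forall q : R, 0 <= q <= 1 ->
       C_B lam p B alpha d theta q <= C_B lam p B alpha d theta 1).
Proof.
pose proof (lambda_max_pos alpha d theta Halpha Hd Htheta) as HL.
set (L := lambda_max alpha d theta) in *.
assert (Hln : 0 < ln (1 + theta)) by (rewrite <- ln_1; apply ln_increasing; lra).
assert (Hp : 0 < p < 1) by lra.
unfold C_B; fold L; split.
- intros qh _ Hf q _. rewrite Hf.
  replace (lam * (L / lam)) with L by (field; lra).
  apply Rmult_le_compat_r; [lra | exact (xexp_le_at_max L _ HL)].
- intros Hnone q Hq.
  assert (HpL : p < L / lam).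
  { apply Rnot_le_lt; intros HLp. apply Hnone, (f_B_onto B p HB Hp).
    split; [apply Rlt_le, Rdiv_lt_0_compat|]; lra. }
  pose proof (f_B_bounds B p HB Hp q Hq).
  rewrite (f_B_1 B p HB Hp).
  apply Rmult_le_compat_r; [lra|].
  apply xexp_le_increasing; [exact HL | nra |].
  apply Rmult_lt_compat_l with (r := lam) in HpL; [|lra].
  replace (lam * (L / lam)) with L in HpL by (field; lra); lra.
Qed.
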